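(* Let $\Delta$ be a finite set with $|\Delta|\ge2$, $\ell\ge2$, $\Omega=\Delta^\ell$, $W=\mathrm{Sym}\,\Delta\wr S_\ell$ in product action on $\Omega$, $G\le W$, and let $M$ be a minimal normal subgroup of $G$ transitive on $\Omega$, $M=T_1\times\cdots\times T_k$ with the $T_i$ isomorphic finite simple groups. Let $\Gamma$ be a connected graph with vertex set $\Omega$ with $G\le\mathrm{Aut}\,\Gamma$. Suppose $\Gamma$ is $M$-arc-transitive and the inclusion $G\le W$ is normal. Then $\Gamma\cong(\Gamma_1)^\ell$, where $\Gamma_1$ is the graph with vertex set $\Delta$ whose edge set is the $M^{(1)}$-orbit of $\{\alpha_1,\beta_1\}$, with $\alpha_1,\beta_1\in\Delta$ chosen so that $(\alpha_1,\dots,\alpha_1)$ and $(\beta_1,\beta_2,\dots,\beta_\ell)$ are adjacent in $\Gamma$ for some $\beta_2,\dots,\beta_\ell\in\Delta$. In particular, $\Gamma$ is not $(G,2)$-arc-transitive.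
   Context: Product action: $(\delta_1,\dots,\delta_\ell)^{(g_1,\dots,g_\ell)h}=(\delta_{1h^{-1}}g_{1h^{-1}},\dots,\delta_{\ell h^{-1}}g_{\ell h^{-1}})$. Let $\pi:W\to S_\ell$ be the natural projection, $W_j$ the stabiliser of $j$ under $\pi$, $W_j=\mathrm{Sym}\,\Delta\times(\mathrm{Sym}\,\Delta\wr S_{\ell-1})$ with the first factor on the $j$-th coordinate; the component $H^{(j)}$ of $H\le W$ is the projection of $H\cap W_j$ onto the first factor. When $M$ is non-abelian, $M^{(j)}$ is identified with the product of those $T_i$ not in the kernel of $M\to M^{(j)}$; the inclusion $G\le W$ is normal if $M$ is non-abelian and each $T_i$ lies in exactly one $M^{(j)}$ (equivalently $M=\prod_jM^{(j)}$). The direct product $(\Gamma_1)^\ell$ has vertex set $V(\Gamma_1)^\ell$, with $(\gamma_1,\dots,\gamma_\ell)$ adjacent to $(\gamma'_1,\dots,\gamma'_\ell)$ iff $\gamma_i$ is adjacent to $\gamma'_i$ in $\Gamma_1$ for all $i$. $\Gamma$ is $M$-arc-transitive if $M$ is transitive on ordered pairs of adjacent vertices; it is $(G,2)$-arc-transitive if $G$ is transitive on $2$-arcs, i.e. sequences $(v_0,v_1,v_2)$ with $v_0\sim v_1\sim v_2$ and $v_0\ne v_2$. *)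

From mathcomp Require Import all_boot all_fingroup all_solvable.
Set Implicit Arguments. Unset Strict Implicit. Unset Printing Implicit Defensive.

Local Open Scope group_scope.

Section Wreath.
Variables (D : finType) (l : nat).

(* MathComp permutations compose as right
   actions ((s * t) x = t (s x)), matching the paper's exponent notation. *)
Definition wr_act (g : {ffun 'I_l -> {perm D}}) (h : {perm 'I_l})
    (x : {ffun 'I_l -> D}) : {ffun 'I_l -> D} :=
  [ffun i => g (h^-1 i) (x (h^-1 i))].

Definition wreath_set : {set {perm {ffun 'I_l -> D}}} :=
  [set s : {perm {ffun 'I_l -> D}} | [exists g : {ffun 'I_l -> {perm D}}, exists h : {perm 'I_l},
            [forall x, s x == wr_act g h x]]].

Definition in_Wj (j : 'I_l) (s : {perm {ffun 'I_l -> D}}) : bool :=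
  [exists g : {ffun 'I_l -> {perm D}}, exists h : {perm 'I_l},
     (h j == j) && [forall x, s x == wr_act g h x]].

Definition component (H : {set {perm {ffun 'I_l -> D}}}) (j : 'I_l)
    : {set {perm D}} :=
  [set p : {perm D} | [exists s in H,
      in_Wj j s && [forall x : {ffun 'I_l -> D}, s x j == p (x j)]]].

Definition base_prod (K : 'I_l -> {set {perm D}})
    : {set {perm {ffun 'I_l -> D}}} :=
  [set s : {perm {ffun 'I_l -> D}} | [exists g : {ffun 'I_l -> {perm D}},
     [forall i, g i \in K i] && [forall x, s x == wr_act g 1 x]]].

Definition normal_inclusion (M : {set {perm {ffun 'I_l -> D}}}) : Prop :=
  ~~ abelian M /\ M = base_prod (component M).

Definition pow_graph (e1 : rel D) : rel {ffun 'I_l -> D} :=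
  fun x y => [forall i, e1 (x i) (y i)].

End Wreath.

Definition orbit_graph (D : finType) (H : {set {perm D}}) (a b : D) : rel D :=
  fun u v => [exists p in H,
     ((p a == u) && (p b == v)) || ((p a == v) && (p b == u))].

Definition graph_iso (V1 V2 : finType) (e1 : rel V1) (e2 : rel V2) : Prop :=
  exists f : V1 -> V2, bijective f /\ forall x y, e2 (f x) (f y) = e1 x y.

Definition is_aut (V : finType) (e : rel V) (s : {perm V}) : Prop :=
  forall x y, e (s x) (s y) = e x y.

Definition arc_transitive (V : finType) (H : {set {perm V}}) (e : rel V) : Prop :=
  forall u v u' v', e u v -> e u' v' ->
    exists2 m, m \in H & m u = u' /\ m v = v'.

Definition two_arc_transitive (V : finType) (H : {set {perm V}}) (e : rel V)
  : Prop :=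
  forall u0 u1 u2 v0 v1 v2,
    e u0 u1 -> e u1 u2 -> u0 != u2 ->
    e v0 v1 -> e v1 v2 -> v0 != v2 ->
    exists2 s, s \in H & [/\ s u0 = v0, s u1 = v1 & s u2 = v2].

(* Fix an edge from (a,...,a) to b and let R_j be the graph on D whose edge set is the
   M^(j)-orbit of {a, b_j}.  As M is arc-transitive and equals the product of its
   components M^(j), the edges of Gamma are exactly the pairs that are edges of R_j in
   every coordinate j.  Minimality of M makes the image of G in S_l transitive: the
   elements of M moving only coordinates in one orbit of that image form a normal
   subgroup of G which meets M nontrivially, hence contains M, and transitivity of M
   then forces the orbit to be everything.  An element of G sending coordinate j to i
   maps R_j isomorphically onto R_i, so Gamma is isomorphic to (R_1)^l.  Finally a
   connected graph on at least three vertices has a vertex with two neighbours, so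
   every R_j does; this yields two 2-arcs of Gamma with equal first two vertices whose
   last vertex agrees with the first one in all coordinates but one, respectively in
   none, and no element of the wreath product, which permutes coordinates, can map one
   to the other. *)

From mathcomp Require Import all_boot all_fingroup all_solvable.
Set Implicit Arguments. Unset Strict Implicit. Unset Printing Implicit Defensive.

Definition branching (T : finType) (e : rel T) : bool :=
  [exists w, exists n, exists n', [&& e w n, e w n' & n != n']].

Lemma branchingP (T : finType) (e : rel T) :
  reflect (exists w n n', [/\ e w n, e w n' & n != n']) (branching e).
Proof.
apply: (iffP existsP) => [[w /existsP [n /existsP [n' /and3P []]]] | [w [n [n' []]]]].
  by exists w, n, n'.
by move=> wn wn' nn'; exists w; apply/existsP; exists n; apply/existsP; exists n'; apply/and3P.
Qed.

Lemma branching_perm (T : finType) (s : {perm T}) (e1 e2 : rel T) :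
  (forall u v, e1 (s u) (s v) = e2 u v) -> branching e1 = branching e2.
Proof.
move=> es; apply/branchingP/branchingP => -[w [n [n' [wn wn' nn']]]].
  exists (s^-1 w)%g, (s^-1 n)%g, (s^-1 n')%g; rewrite -!es !permKV.
  by split=> //; rewrite (inj_eq perm_inj).
by exists (s w), (s n), (s n'); rewrite !es (inj_eq perm_inj).
Qed.

Lemma orbit_graph_sym (T : finType) (H : {set {perm T}}) a b :
  symmetric (orbit_graph H a b).
Proof.
by move=> u v; apply/existsP/existsP => -[p /andP [pH o]]; exists p; rewrite pH orbC.
Qed.

Section Connectivity.
Variables (T : finType) (e : rel T).
Hypotheses (e_sym : symmetric e) (e_conn : forall x y, connect e x y).

Lemma not_branching_connect x y :
  ~~ branching e -> connect e x y -> y = x \/ e x y.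
Proof.
move=> nbr /connectP [p + ->].
have nb_uniq u v v' : e u v -> e u v' -> v = v'.
  move=> uv uv'; apply/eqP; apply: contraNT nbr => vv'.
  by apply/branchingP; exists u, v, v'.
suff: forall z, z = x \/ e x z -> path e z p -> last z p = x \/ e x (last z p).
  by apply; left.
elim: p => [|w p IH] z //= xz /andP [zw pth]; apply: IH pth.
by case: xz => [<- | xz]; [right | left; apply: nb_uniq zw _; rewrite e_sym].
Qed.

Lemma connected_branching : 2 < #|T| -> branching e.
Proof.
case/card_gt2P => x [y [z [_ [xy yz zx]]]]; apply: contraT => nbr.
have [/eqP | exy] := not_branching_connect nbr (e_conn x y).
  by rewrite eq_sym (negbTE xy).
have [/eqP | exz] := not_branching_connect nbr (e_conn x z).
  by rewrite (negbTE zx).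
by case/negP: nbr; apply/branchingP; exists x, y, z.
Qed.

Lemma transitive_connected_edge (H : {group {perm T}}) :
  [transitive H, on [set: T] | 'P] -> (forall s, s \in H -> is_aut e s) ->
  1 < #|T| -> forall v, exists w, e v w.
Proof.
move=> Htr Haut /card_gt1P [x [y [_ _ xy]]] v.
have [z [z' zz']] : exists z z', e z z'.
  move: (e_conn x y) => /connectP [[|z p] /= pth lst]; first by rewrite -lst eqxx in xy.
  by exists x, z; case/andP: pth.
have [s sH sz] := atransP2 Htr (in_setT z) (in_setT v).
by exists (s z'); rewrite sz /= Haut.
Qed.

End Connectivity.

Lemma minnormal_sub (gT : finGroupType) (M G H : {group gT}) :
  minnormal M G -> G \subset 'N(H)%g -> (M :&: H != 1)%g -> M \subset H.
Proof.
case/mingroupP => /andP [_ nMG] minM nHG ntMH.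
by rewrite -(minM (M :&: H)%G) ?subsetIr ?subsetIl //= ntMH normsI.
Qed.

Section ProductAction.
Variables (D : finType) (l : nat).
Local Notation vertex := {ffun 'I_l -> D}.
Local Open Scope group_scope.

Lemma wr_act1 (g : {ffun 'I_l -> {perm D}}) x i : wr_act g 1 x i = g i (x i).
Proof. by rewrite /wr_act ffunE invg1 perm1. Qed.

Lemma wreath_setP s :
  s \in wreath_set D l -> exists (g : {ffun 'I_l -> {perm D}}) (h : {perm 'I_l}),
    s =1 wr_act g h.
Proof.
by rewrite inE => /existsP [g /existsP [h /forallP sgh]]; exists g, h => x; apply/eqP.
Qed.

Lemma wr_actM g1 h1 g2 h2 (x : vertex) :
  wr_act g2 h2 (wr_act g1 h1 x) = wr_act [ffun i => g1 i * g2 (h1 i)] (h1 * h2) x.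
Proof. by apply/ffunP => i; rewrite !ffunE invMg !permM permKV. Qed.

Definition wreath_top (G : {set {perm vertex}}) : {set {perm 'I_l}} :=
  [set h | [exists g in G, exists gg : {ffun 'I_l -> {perm D}},
             [forall x, g x == wr_act gg h x]]].

Lemma wreath_topP (G : {set {perm vertex}}) h :
  reflect (exists2 g, g \in G & exists gg, g =1 wr_act gg h) (h \in wreath_top G).
Proof.
rewrite inE; apply: (iffP existsP).
  case=> g /andP [gG /existsP [gg /forallP ggh]].
  by exists g => //; exists gg => x; apply/eqP.
case=> g gG [gg ggh]; exists g; rewrite gG.
by apply/existsP; exists gg; apply/forallP => x; rewrite ggh.
Qed.

Lemma group_set_wreath_top (G : {group {perm vertex}}) : group_set (wreath_top G).
Proof.
apply/group_setP; split.
  apply/wreath_topP; exists 1; rewrite ?group1 //; exists [ffun => 1] => x.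
  by apply/ffunP => i; rewrite wr_act1 ffunE !perm1.
move=> h1 h2 /wreath_topP [g1 g1G [gg1 e1]] /wreath_topP [g2 g2G [gg2 e2]].
apply/wreath_topP; exists (g1 * g2); rewrite ?groupM //.
by eexists => x; rewrite permM e1 e2 wr_actM.
Qed.

Canonical wreath_top_group G := Group (group_set_wreath_top G).

Definition prod_graph (R : 'I_l -> rel D) : rel vertex :=
  fun x y => [forall i, R i (x i) (y i)].

Section Components.
Variable M : {group {perm vertex}}.
Hypothesis eqM : M = base_prod (component M) :> {set _}.

Lemma mem_base_prod s : s \in M ->
  exists2 g : {ffun 'I_l -> {perm D}},
    forall i, g i \in component M i & forall x i, s x i = g i (x i).
Proof.
rewrite {1}eqM inE => /existsP [g /andP [/forallP gM /forallP sg]].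
by exists g => // x i; rewrite (eqP (sg x)) wr_act1.
Qed.

Lemma componentP i p :
  p \in component M i <-> exists2 s, s \in M & forall x, s x i = p (x i).
Proof.
split=> [| [s sM sp]].
  rewrite inE => /existsP [s /andP [sM /andP [_ /forallP sp]]].
  by exists s => // x; apply/eqP.
rewrite inE; apply/existsP; exists s; rewrite sM /=.
apply/andP; split; last by apply/forallP => x; rewrite sp.
have [g _ sg] := mem_base_prod sM.
apply/existsP; exists g; apply/existsP; exists 1; rewrite perm1 eqxx /=.
by apply/forallP => x; apply/eqP/ffunP => j; rewrite sg wr_act1.
Qed.

Lemma base_prod_perm (p : 'I_l -> {perm D}) :
  (forall i, p i \in component M i) ->
  exists2 s, s \in M & forall x i, s x i = p i (x i).
Proof.
move=> pM; have inj_p : injective (wr_act (finfun p) 1).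
  by move=> x y /ffunP xy; apply/ffunP => i; move: (xy i); rewrite !wr_act1 => /perm_inj.
exists (perm inj_p); last by move=> x i; rewrite permE wr_act1 ffunE.
rewrite eqM inE; apply/existsP; exists (finfun p); apply/andP; split.
  by apply/forallP => i; rewrite ffunE.
by apply/forallP => x; rewrite permE.
Qed.

Lemma component1 i : 1 \in component M i.
Proof. by apply/componentP; exists 1 => // x; rewrite !perm1. Qed.

Lemma componentM i p q :
  p \in component M i -> q \in component M i -> p * q \in component M i.
Proof.
move=> /componentP [s sM sp] /componentP [t tM tq]; apply/componentP.
by exists (s * t); [rewrite groupM | move=> x; rewrite !permM tq sp].
Qed.

Lemma component_single i p : p \in component M i ->
  exists2 s, s \in M & forall x k, s x k = if k == i then p (x k) else x k.
Proof.
move=> pM; pose q k := if k == i then p else 1.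
have qM k : q k \in component M k by rewrite /q; case: eqP => [-> | _]; rewrite ?component1.
have [s sM sq] := base_prod_perm qM.
by exists s => // x k; rewrite sq /q; case: eqP; rewrite ?perm1.
Qed.

Lemma arc_transitive_edgeE (e : rel vertex) a b :
  (forall s, s \in M -> is_aut e s) -> arc_transitive M e -> symmetric e ->
  e [ffun => a] b -> e =2 prod_graph (fun i => orbit_graph (component M i) a (b i)).
Proof.
move=> Maut Marc esym eab x y; apply/idP/forallP => [exy i | xy].
  have [m mM [<- <-]] := Marc _ _ _ _ eab exy; have [g gM mg] := mem_base_prod mM.
  by apply/existsP; exists (g i); rewrite gM !mg ffunE !eqxx.
have [m' m'M [m'a m'b]] := Marc _ _ _ _ eab (etrans (esym _ _) eab).
have [g' g'M m'g'] := mem_base_prod m'M.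
have g'a i : g' i a = b i by rewrite -m'a m'g' ffunE.
have g'b i : g' i (b i) = a by rewrite -m'g' m'b ffunE.
have [p pM pxy] : exists2 p : 'I_l -> {perm D},
    forall i, p i \in component M i & forall i, p i a = x i /\ p i (b i) = y i.
  suff /fin_all_exists [p pP] : forall i, exists p : {perm D},
      p \in component M i /\ p a = x i /\ p (b i) = y i.
    by exists p => i; case: (pP i).
  move=> i; case/existsP: (xy i) => p /andP [pM /orP [] /andP [/eqP pa /eqP pb]].
    by exists p.
  by exists (g' i * p); rewrite componentM // !permM g'a g'b.
have [s sM sp] := base_prod_perm pM.
have -> : x = s [ffun => a] by apply/ffunP => i; rewrite sp ffunE (proj1 (pxy i)).
have -> : y = s b by apply/ffunP => i; rewrite sp (proj2 (pxy i)).
by rewrite Maut.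
Qed.

End Components.

Section ProductGraph.
Variable R : 'I_l -> rel D.

Lemma prod_graph_coord (x y : vertex) k :
  (forall i, i != k -> R i (x i) (y i)) -> prod_graph R x y = R k (x k) (y k).
Proof.
move=> Rxy; apply/forallP/idP => [/(_ k) // | Rk i].
by case: (eqVneq i k) => [-> | /Rxy].
Qed.

Variable e : rel vertex.
Hypothesis eE : e =2 prod_graph R.

Lemma wreath_aut_coord x0 y0 s g h : e x0 y0 -> is_aut e s -> s =1 wr_act g h ->
  forall k u v, R (h k) (g k u) (g k v) = R k u v.
Proof.
move=> exy saut sgh k u v.
have R0 i : R i (x0 i) (y0 i) by move: exy; rewrite eE => /forallP.
have sR0 i : R i (s x0 i) (s y0 i) by move: exy; rewrite -saut eE => /forallP.
pose x := [ffun i => if i == k then u else x0 i].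
pose y := [ffun i => if i == k then v else y0 i].
have := saut x y; rewrite !eE (prod_graph_coord (k := h k)); last first.
  move=> i ihk; have := sR0 i.
  have kh : (h^-1 i == k) = false by apply: contraNF ihk => /eqP <-; rewrite permKV.
  by rewrite !sgh !ffunE kh.
rewrite (prod_graph_coord (k := k)); last by move=> i /negbTE ik; rewrite !ffunE ik R0.
by rewrite !sgh !ffunE permK eqxx.
Qed.

Lemma prod_graph_iso i :
  (forall j, exists s : {perm D}, forall u v, R i (s u) (s v) = R j u v) ->
  graph_iso e (@pow_graph D l (R i)).
Proof.
move=> /fin_all_exists [s sR].
exists (fun x : vertex => [ffun j => s j (x j)]); split.
  exists (fun x : vertex => [ffun j => (s j)^-1 (x j)]) => x;
    by apply/ffunP => j; rewrite !ffunE ?permK ?permKV.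
by move=> x y; rewrite eE; apply: eq_forallb => j; rewrite !ffunE sR.
Qed.

Lemma prod_graph_branching : branching e -> exists j, branching (R j).
Proof.
case/branchingP => w [n [n' [+ + nn']]]; rewrite !eE => /forallP wn /forallP wn'.
have /existsP [j njn'] : [exists j, n j != n' j].
  by apply: contraNT nn' => /existsPn nn; apply/eqP/ffunP => j; apply/eqP/negPn.
by exists j; apply/branchingP; exists (w j), (n j), (n' j).
Qed.

Lemma wreath_not_two_arc_transitive (G : {set {perm vertex}}) (i k : 'I_l) :
  i != k -> G \subset wreath_set D l -> (forall j, symmetric (R j)) ->
  (forall j, branching (R j)) -> ~ two_arc_transitive G e.
Proof.
move=> ik GW Rsym /(_ _) /branchingP Rbr.
have /fin_all_exists [t tR] : forall j, exists t : D * D * D,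
    [/\ R j t.1.1 t.1.2, R j t.1.1 t.2 & t.1.2 != t.2].
  by move=> j; have [w [n [n' ?]]] := Rbr j; exists (w, n, n').
pose x1 : vertex := [ffun j => (t j).1.1].
pose x0 : vertex := [ffun j => (t j).1.2].
pose xA : vertex := [ffun j => if j == i then (t j).2 else (t j).1.2].
pose xB : vertex := [ffun j => (t j).2].
have e01 : e x0 x1 by rewrite eE; apply/forallP => j; rewrite !ffunE Rsym; case: (tR j).
have e1A : e x1 xA by rewrite eE; apply/forallP => j; rewrite !ffunE; case: ifP; case: (tR j).
have e1B : e x1 xB by rewrite eE; apply/forallP => j; rewrite !ffunE; case: (tR j).
have neq_at j (xj : vertex) : x0 j != xj j -> x0 != xj.
  by apply: contraNN => /eqP ->.
have n0A : x0 != xA by apply: (neq_at i); rewrite !ffunE eqxx; case: (tR i).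
have n0B : x0 != xB by apply: (neq_at i); rewrite !ffunE; case: (tR i).
move=> G2; have [s sG [s0 _ sA]] := G2 _ _ _ _ _ _ e01 e1A n0A e01 e1B n0B.
have [g [h sgh]] := wreath_setP (subsetP GW s sG).
move/ffunP: s0 => /(_ (h k)); move/ffunP: sA => /(_ (h k)).
rewrite !sgh !ffunE !permK eq_sym (negbTE ik) => -> eq0.
by case: (tR (h k)) => _ _; rewrite eq0 eqxx.
Qed.

Lemma wreath_coord_iso (G : {group {perm vertex}}) x0 y0 :
  e x0 y0 -> (forall s, s \in G -> is_aut e s) ->
  (forall i j, exists2 h, h \in wreath_top G & h i = j) ->
  forall i j, exists s : {perm D}, forall u v, R i (s u) (s v) = R j u v.
Proof.
move=> exy Gaut Gtop i j; have [h /wreath_topP [g gG [gg ggh]] hji] := Gtop j i.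
by exists (gg j) => u v; rewrite -hji (wreath_aut_coord exy (Gaut g gG) ggh).
Qed.

End ProductGraph.

Definition coord_support (J : {set 'I_l}) : {set {perm vertex}} :=
  [set s : {perm vertex} | [forall x, forall k, (k \notin J) ==> (s x k == x k)]].

Lemma coord_supportP (J : {set 'I_l}) (s : {perm vertex}) :
  reflect (forall x k, k \notin J -> s x k = x k) (s \in coord_support J).
Proof.
rewrite inE; apply: (iffP forallP) => [sJ x k kJ | sJ x].
  by apply/eqP; move/forallP: (sJ x) => /(_ k); rewrite kJ.
by apply/forallP => k; apply/implyP => /sJ ->.
Qed.

Lemma group_set_coord_support (J : {set 'I_l}) : group_set (coord_support J).
Proof.
apply/group_setP; split; first by apply/coord_supportP => x k _; rewrite perm1.
move=> s t /coord_supportP sJ /coord_supportP tJ; apply/coord_supportP => x k kJ.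
by rewrite permM tJ // sJ.
Qed.

Canonical coord_support_group (J : {set 'I_l}) := Group (group_set_coord_support J).

Arguments coord_supportP {J s}.

Lemma wreath_norm_coord_support (G : {group {perm vertex}}) (J : {set 'I_l}) :
  G \subset wreath_set D l -> (forall h k, h \in wreath_top G -> k \in J -> h k \in J) ->
  G \subset 'N(coord_support J).
Proof.
move=> GW Jstable; apply/subsetP => g gG; rewrite inE; apply/subsetP => _ /imsetP [t tJ ->].
have [gg [h ggh]] := wreath_setP (subsetP GW g gG).
have hG : h \in wreath_top G by apply/wreath_topP; exists g => //; exists gg.
have hJ k : k \notin J -> (h^-1) k \notin J.
  by apply: contra => /(Jstable _ _ hG); rewrite permKV.
apply/coord_supportP => x k kJ.
rewrite conjgE !permM ggh ffunE (coord_supportP tJ) ?hJ //.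
by have /ffunP /(_ k) := ggh (g^-1 x); rewrite permKV ffunE.
Qed.

Lemma transitive_moves_coord (M : {group {perm vertex}}) :
  [transitive M, on [set: vertex] | 'P] -> 1 < #|D| ->
  forall x j, exists2 m, m \in M & m x j != x j.
Proof.
move=> Mtr /card_gt1P [d1 [d2 [_ _ d12]]] x j.
have [d dx] : exists d, d != x j.
  by case: (eqVneq d1 (x j)) => [<- | ]; [exists d2; rewrite eq_sym | exists d1].
pose y := [ffun k => if k == j then d else x k].
have [m mM /ffunP /(_ j)] := atransP2 Mtr (in_setT x) (in_setT y).
by rewrite ffunE eqxx => mj; exists m; rewrite // -mj.
Qed.

Lemma wreath_top_transitive (G M : {group {perm vertex}}) :
  1 < #|D| -> G \subset wreath_set D l -> minnormal M G ->
  [transitive M, on [set: vertex] | 'P] ->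
  M = base_prod (component M) :> {set _} ->
  forall i j, exists2 h, h \in wreath_top G & h i = j.
Proof.
move=> hD GW minM Mtr eqM i.
pose J := orbit 'P (wreath_top G) i.
have Jstable h k : h \in wreath_top G -> k \in J -> h k \in J.
  by move=> hG /orbitP [p pG <-]; rewrite -apermE -actM mem_orbit ?groupM.
have /card_gt0P [d _] := ltnW hD; pose x0 : vertex := [ffun => d].
have MJ : M \subset coord_support J.
  apply: minnormal_sub minM (wreath_norm_coord_support GW Jstable) _.
  have [m mM mi] := transitive_moves_coord Mtr hD x0 i.
  have [g gM mg] := mem_base_prod eqM mM.
  have [s sM sg] := component_single eqM (gM i).
  apply/trivgPn; exists s.
    rewrite inE sM; apply/coord_supportP => x k kJ; rewrite sg.
    by case: eqP kJ => // ->; rewrite orbit_refl.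
  apply: contraNneq mi => s1; move: (sg x0 i); rewrite eqxx s1 perm1 /= => gx0.
  by rewrite mg -gx0.
move=> j; have [m mM mj] := transitive_moves_coord Mtr hD x0 j.
have : j \in J by apply: contraR mj => jJ; rewrite (coord_supportP (subsetP MJ m mM)).
by case/orbitP => h hG <-; exists h.
Qed.

End ProductAction.

Theorem proposition3p4 (D : finType) (l : nat)
    (G M : {group {perm {ffun 'I_l -> D}}}) (e : rel {ffun 'I_l -> D}) :
  1 < #|D| -> 1 < l ->
  G \subset wreath_set D l ->
  (M <| G)%g -> minnormal M G ->
  [transitive M, on [set: {ffun 'I_l -> D}] | 'P] ->
  symmetric e -> irreflexive e ->
  (forall x y, connect e x y) ->
  (forall s, s \in G -> is_aut e s) ->
  arc_transitive M e ->
  normal_inclusion M ->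
  forall i1 : 'I_l, val i1 = 0 ->
    (exists (a : D) (b : {ffun 'I_l -> D}), e [ffun => a] b) /\
    (forall (a : D) (b : {ffun 'I_l -> D}), e [ffun => a] b ->
       graph_iso e (@pow_graph D l (orbit_graph (component M i1) a (b i1)))) /\
    ~ two_arc_transitive G e.
Proof.
move=> hD hl GW nMG minM Mtr esym _ econn Gaut Marc [_ eqM] i1 i10.
have Maut s : s \in M -> is_aut e s by move=> sM; apply/Gaut/(subsetP (normal_sub nMG)).
have V_gt2 : 2 < #|{ffun 'I_l -> D}|.
  rewrite card_ffun card_ord; apply: (@leq_trans (2 ^ 2)) => //.
  by apply: leq_trans (leq_pexp2l _ hl) _; rewrite // leq_exp2r // ltnW.
have [a0 [b0 eab0]] : exists a b, e [ffun => a] b.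
  have /card_gt0P [a _] := ltnW hD.
  have [b eab] := transitive_connected_edge econn Mtr Maut (ltnW V_gt2) [ffun => a].
  by exists a, b.
pose R a (b : {ffun 'I_l -> D}) i := orbit_graph (component M i) a (b i).
have eE a b : e [ffun => a] b -> e =2 prod_graph (R a b).
  exact: (arc_transitive_edgeE eqM Maut Marc esym).
have Riso a b (eab : e [ffun => a] b) :=
  wreath_coord_iso (eE a b eab) eab Gaut (wreath_top_transitive hD GW minM Mtr eqM).
split; [by exists a0, b0 | split => [a b eab | ]].
  exact: prod_graph_iso (eE a b eab) _ (Riso a b eab i1).
have [j Rj] := prod_graph_branching (eE a0 b0 eab0) (connected_branching esym econn V_gt2).
apply: (wreath_not_two_arc_transitive (eE a0 b0 eab0) (i := i1) (k := Ordinal hl)) GW _ _.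
- by apply/eqP => /(f_equal val); rewrite /= i10.
- by move=> k; apply: orbit_graph_sym.
- by move=> k; have [s sR] := Riso a0 b0 eab0 k j; rewrite (branching_perm sR).
Qed.
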